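(* Let $k \ge 1$. For every instance $(d,\mathcal{C},k)$ of $k$-center and every execution of the reverse greedy algorithm on it (with any tie-breaking), the returned set $F_{n-k}$ satisfies $\mathrm{cost}(F_{n-k}) \le 2k\cdot \mathrm{OPT}$. Conversely, for every $k$ there exists an instance of $k$-center and an execution of reverse greedy on it (for some valid choice of tie-breaking) whose returned solution has cost $(2k-2)\cdot\mathrm{OPT}$. That is, reverse greedy is between a $(2k-2)$-approximation and a $2k$-approximation for $k$-center.
   Context: An instance of $k$-center consists of a finite metric space $(d,\mathcal{C})$ with $|\mathcal{C}| = n$ and an integer $k\in\mathbb{N}$ with $k\le n$. Every point of $\mathcal{C}$ is both a client and a potential facility. For $c\in\mathcal{C}$ and nonempty $F\subseteq\mathcal{C}$, $d(c,F):=\min_{f\in F} d(c,f)$, and $\mathrm{cost}(F):=\max_{c\in\mathcal{C}} d(c,F)$. $\mathrm{OPT}$ is the minimum of $\mathrm{cost}(F)$ over all $F\subseteq\mathcal{C}$ with $|F|\le k$. The reverse greedy algorithm sets $F_0:=\mathcal{C}$ and, for $i=1,\dots,n-k$, chooses $f_i\in\arg\min_{f\in F_{i-1}}\mathrm{cost}(F_{i-1}\setminus\{f\})$ (ties broken arbitrarily) and sets $F_i:=F_{i-1}\setminus\{f_i\}$; it returns $F_{n-k}$. An execution is any run of this algorithm corresponding to some choice of tie-breaking. *)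

From HB Require Import structures.
From mathcomp Require Import all_boot all_order all_algebra.
Set Implicit Arguments. Unset Strict Implicit. Unset Printing Implicit Defensive.
Import Order.TTheory GRing.Theory Num.Theory.
Local Open Scope ring_scope.

Section KCenter.
Variables (R : realFieldType) (T : finType) (d : T -> T -> R).

Definition is_metric : Prop :=
  [/\ forall x y, 0 <= d x y,
      forall x y, (d x y == 0) = (x == y),
      forall x y, d x y = d y x &
      forall x y z, d x z <= d x y + d y z].

(* d(c, F) = min_{f in F} d(c, f), for F nonempty (0 by convention if F = set0). *)
Definition dist_to (c : T) (F : {set T}) : R :=
  match [pick f in F] with
  | Some f0 => \big[Num.min/d c f0]_(f in F) d c f
  | None => 0
  end.

(* cost(F) = max_{c} d(c, F) (distances are >= 0, so 0 is a neutral start). *)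
Definition cost (F : {set T}) : R := \big[Num.max/0]_(c : T) dist_to c F.

Definition is_OPT (k : nat) (opt : R) : Prop :=
  (exists2 F : {set T}, (F != set0) && (#|F| <= k)%N & cost F = opt) /\
  (forall F : {set T}, (F != set0) && (#|F| <= k)%N -> opt <= cost F).

Fixpoint rg_exec (F : {set T}) (s : seq T) : Prop :=
  match s with
  | [::] => True
  | f :: s' =>
      [/\ f \in F,
          forall g, g \in F -> cost (F :\ f) <= cost (F :\ g) &
          rg_exec (F :\ f) s']
  end.

Definition rg_out (F : {set T}) (s : seq T) : {set T} :=
  foldl (fun G f => G :\ f) F s.

End KCenter.

(* Fix a feasible solution O of radius r and send every point u to a
   point [center_of u] of O within distance r.  As long as more than k facilities remain,
   two of them share their center, and deleting one of them costs at most 2r more than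
   the current radius; the greedy deletion does at least as well.  Tracking the number m
   of centers of O still represented by the facilities, every client stays within
   2(k - m) r of a point whose center is represented; m only drops when the cost is
   at most 2(k - m + 1) r, so the final cost is at most 2k r.

   For k = L + 2 we build a metric with centers c_0, ..., c_L (so OPT = 1)
   and clients p_(j,s), together with a run that first deletes all centers and then
   clients in phases.  In each phase every single deletion costs at least some c while
   the set reached at the end of the phase costs at most c, so the points of the phase
   can be deleted greedily in any order.  The run ends with the k base clients p_(0,s),
   s > L, whose cost is 2L + 2 = 2k - 2. *)

From HB Require Import structures.
From mathcomp Require Import all_boot all_order all_algebra.
From mathcomp Require Import reals.
From mathcomp Require Import zify.
Import Order.TTheory GRing.Theory Num.Theory.
Local Open Scope ring_scope.
Set Implicit Arguments. Unset Strict Implicit. Unset Printing Implicit Defensive.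

Lemma setD1_neq0 (T : finType) (F : {set T}) x y g :
  x \in F -> y \in F -> x != y -> F :\ g != set0.
Proof.
move=> xF yF xy; apply/set0Pn; case: (eqVneq g x) => [->|gx].
  by exists y; rewrite !inE yF andbT eq_sym.
by exists x; rewrite !inE xF andbT eq_sym.
Qed.

Lemma card_imsetD1 (T U : finType) (f : T -> U) (A : {set T}) x :
  (#|f @: A| <= (#|f @: (A :\ x)|).+1)%N.
Proof.
have sub : f @: A \subset f x |: f @: (A :\ x).
  apply/subsetP => _ /imsetP [y yA ->]; rewrite !inE.
  by case: (eqVneq y x) => [->|yx]; rewrite ?eqxx // imset_f ?orbT // !inE yx.
by apply: leq_trans (subset_leq_card sub) _; rewrite cardsU1; case: (_ \notin _).
Qed.

Section Cost.
Variables (R : realFieldType) (T : finType) (d : T -> T -> R).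

Lemma dist_to_le u (F : {set T}) v : v \in F -> dist_to d u F <= d u v.
Proof.
move=> vF; rewrite /dist_to; case: pickP => [f0 _|none]; last by rewrite none in vF.
exact: (bigmin_le_cond _ (P := fun f => f \in F)).
Qed.

Lemma dist_to_attained u (F : {set T}) :
  F != set0 -> exists2 v, v \in F & dist_to d u F = d u v.
Proof.
move=> /set0Pn [w wF]; rewrite /dist_to; case: pickP => [f0 f0F|none]; last by rewrite none in wF.
apply: (big_ind (fun m => exists2 v, v \in F & m = d u v)) => [|_ _ [a aF ->] [b bF ->]|v vF].
- by exists f0.
- by case: leP => _; [exists a | exists b].
- by exists v.
Qed.

Lemma dist_to_ge u (F : {set T}) c :
  F != set0 -> (forall v, v \in F -> c <= d u v) -> c <= dist_to d u F.
Proof. by move=> /(dist_to_attained u) [v vF ->]; apply. Qed.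

Lemma cost_ge0 (F : {set T}) : 0 <= cost d F.
Proof. exact: bigmax_ge_id. Qed.

Lemma dist_to_le_cost u (F : {set T}) : dist_to d u F <= cost d F.
Proof. exact: (bigmax_sup u). Qed.

Lemma cost_le (F : {set T}) c :
  0 <= c -> (forall u, dist_to d u F <= c) -> cost d F <= c.
Proof. by move=> c0 h; apply: bigmax_le. Qed.

Lemma cost_antimono (G H : {set T}) :
  G \subset H -> G != set0 -> cost d H <= cost d G.
Proof.
move=> GH G0; apply: cost_le (cost_ge0 G) _ => u.
have [v vG e] := dist_to_attained u G0.
apply: le_trans (dist_to_le u (subsetP GH v vG)) _.
by rewrite -e dist_to_le_cost.
Qed.

End Cost.
Section Runs.
Variables (R : realFieldType) (T : finType) (d : T -> T -> R).

Lemma rg_outE (F : {set T}) s : rg_out F s = F :\: [set x in s].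
Proof.
elim: s F => [|f s IH] F; first by apply/setP => x; rewrite !inE.
rewrite /rg_out /= -/(rg_out _ _) IH; apply/setP => x; rewrite !inE.
by case: (x == f); rewrite ?andbF // andbC.
Qed.

Lemma rg_out_cat (F : {set T}) s1 s2 : rg_out F (s1 ++ s2) = rg_out (rg_out F s1) s2.
Proof. by rewrite /rg_out foldl_cat. Qed.

Lemma rg_exec_cat (F : {set T}) s1 s2 :
  rg_exec d F s1 -> rg_exec d (rg_out F s1) s2 -> rg_exec d F (s1 ++ s2).
Proof. by elim: s1 F => [|f s1 IH] F //= [fF fmin ex1] ex2; split => //; apply: IH. Qed.

Lemma card_rg_out (F : {set T}) s : rg_exec d F s -> #|rg_out F s| = (#|F| - size s)%N.
Proof.
elim: s F => [|f s IH] F /= ; first by rewrite subn0.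
case=> fF _ ex; rewrite /rg_out /= -/(rg_out _ _) IH // (cardsD1 f F) fF /=; lia.
Qed.

Definition rg_run (F : {set T}) s (G : {set T}) := rg_exec d F s /\ rg_out F s = G.

Lemma rg_run_cat (F G H : {set T}) s1 s2 :
  rg_run F s1 G -> rg_run G s2 H -> rg_run F (s1 ++ s2) H.
Proof.
move=> [ex1 out1] [ex2 out2]; split; last by rewrite rg_out_cat out1.
by apply: rg_exec_cat; rewrite ?out1.
Qed.

End Runs.

Section Phase.
Variables (R : realFieldType) (T : finType) (d : T -> T -> R).
Variables (F0 Fend : {set T}) (c : R).
Hypotheses (Fend_sub : Fend \subset F0) (Fend_neq0 : Fend != set0).
Hypothesis removal_cost_ge : forall g, g \in F0 -> c <= cost d (F0 :\ g).
Hypothesis cost_Fend_le : cost d Fend <= c.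

(* Any removal from a set between Fend and F0 costs at least c, while removing a point
   outside Fend costs at most cost Fend <= c. *)
Lemma rg_exec_down_to s (F : {set T}) : uniq s -> Fend \subset F -> F \subset F0 ->
  [set x in s] = F :\: Fend -> rg_exec d F s.
Proof.
elim: s F => [|f s IH] F //= /andP [fs us] EF FF0 sE.
have /setDP [fF fE] : f \in F :\: Fend by rewrite -sE !inE eqxx.
have EFf : Fend \subset F :\ f.
  by apply/subsetP => x xE; rewrite !inE (subsetP EF x xE) andbT; apply: contraNneq fE => <-.
split => // [g gF|].
- have [y yE] := set0Pn _ Fend_neq0.
  have fy : f != y by apply: contraNneq fE => ->.
  have Fg0 : F :\ g != set0 := setD1_neq0 g fF (subsetP EF y yE) fy.
  apply: le_trans (cost_antimono d EFf Fend_neq0) _.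
  apply: le_trans cost_Fend_le _; apply: le_trans (removal_cost_ge (subsetP FF0 g gF)) _.
  exact: cost_antimono (setSD _ FF0) Fg0.
- apply: IH => //; first by apply: subset_trans FF0; apply: subsetDl.
  apply/setP => x; move/setP/(_ x): sE; rewrite !inE.
  by case: (eqVneq x f) => [->|_] /=; rewrite ?(negbTE fs) ?fE.
Qed.

Lemma rg_phase : rg_run d F0 (enum (F0 :\: Fend)) Fend.
Proof.
have sE : [set x in enum (F0 :\: Fend)] = F0 :\: Fend by apply/setP => x; rewrite inE mem_enum.
split; first exact: rg_exec_down_to (enum_uniq _) Fend_sub (subxx _) sE.
by rewrite rg_outE sE setDDr setDv set0U; apply/setIidPr.
Qed.

End Phase.


Section UpperBound.
Variables (R : realFieldType) (T : finType) (d : T -> T -> R).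
Hypothesis d_metric : is_metric d.
Variables (k : nat) (O : {set T}) (r : R).
Hypotheses (O_neq0 : O != set0) (card_O : (#|O| <= k)%N) (cost_O : cost d O <= r).

Let d_sym x y : d x y = d y x. Proof. by case: d_metric. Qed.
Let d_triangle x y z : d x z <= d x y + d y z. Proof. by case: d_metric. Qed.
Let d_xx x : d x x = 0. Proof. by case: d_metric => _ h _ _; apply/eqP; rewrite h. Qed.

Lemma k_gt0 : (0 < k)%N.
Proof. by apply: leq_trans card_O; rewrite card_gt0. Qed.

Lemma r_ge0 : 0 <= r. Proof. exact: le_trans (cost_ge0 d O) cost_O. Qed.

Definition center_of (u : T) : T := odflt u [pick o in O | d u o <= r].

Lemma center_ofP u : center_of u \in O /\ d u (center_of u) <= r.
Proof.
rewrite /center_of; case: pickP => [o /andP [] //|none].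
have [v vO e] := dist_to_attained d u O_neq0.
by move: (none v); rewrite vO -e (le_trans (dist_to_le_cost d u O) cost_O).
Qed.

Lemma center_of_close x y : center_of x = center_of y -> d x y <= r *+ 2.
Proof.
move=> e; apply: le_trans (d_triangle x (center_of x) y) _.
by rewrite mulr2n lerD //; [case: (center_ofP x) | rewrite e d_sym; case: (center_ofP y)].
Qed.

Lemma card_center_image (F : {set T}) : (#|center_of @: F| <= k)%N.
Proof.
apply: leq_trans card_O; apply/subset_leq_card/subsetP => _ /imsetP [x _ ->].
by case: (center_ofP x).
Qed.

Lemma center_of_collision (F : {set T}) : (k < #|F|)%N ->
  exists f f', [/\ f \in F, f' \in F, f != f' & center_of f = center_of f'].
Proof.
move=> kF; case: (boolP [exists f in F, exists f' in F, (f != f') && (center_of f == center_of f')]).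
  by case/exists_inP => f fF /exists_inP [f' f'F /andP [ff' /eqP e]]; exists f, f'.
move/exists_inPn => H; suff inj : {in F &, injective center_of}.
  by move: (card_center_image F); rewrite (card_in_imset inj) leqNgt kF.
move=> x y xF yF e; apply/eqP; apply: contraT => xy.
by move: (H x xF) => /exists_inPn /(_ y yF); rewrite xy e eqxx.
Qed.

Lemma radius_step m : (2 * m)%:R * r + r *+ 2 = (2 * m.+1)%:R * r.
Proof. by rewrite -[r *+ 2]mulr_natl -mulrDl -natrD addnC -mulnS. Qed.

Definition covers (F : {set T}) := forall u,
  exists2 x, center_of x \in center_of @: F & d u x <= (2 * (k - #|center_of @: F|))%:R * r.

Lemma covers_setT : covers [set: T].
Proof. by move=> u; exists u; rewrite ?imset_f ?inE // d_xx mulr_ge0 ?r_ge0. Qed.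

(* Two facilities of F share their optimal center, so one of them can be removed at cost
   at most 2r more than the current covering radius. *)
Lemma cost_removal_collision (F : {set T}) : (k < #|F|)%N -> covers F ->
  exists2 f, f \in F & cost d (F :\ f) <= (2 * (k - #|center_of @: F|).+1)%:R * r.
Proof.
move=> kF covF; have [f [f' [fF f'F ff' e]]] := center_of_collision kF.
have image_Ff : center_of @: (F :\ f) = center_of @: F.
  apply/eqP; rewrite eqEsubset imsetS ?subsetDl //=.
  apply/subsetP => _ /imsetP [x xF ->]; case: (eqVneq x f) => [->|xf].
    by rewrite e imset_f // !inE f'F eq_sym ff'.
  by rewrite imset_f // !inE xf.
exists f => //; apply: cost_le => [|u]; first by rewrite mulr_ge0 ?r_ge0.
have [x] := covF u; rewrite -image_Ff => /imsetP [y yF e_xy] dux.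
apply: le_trans (dist_to_le d u yF) _; rewrite -radius_step.
by apply: le_trans (d_triangle u x y) _; rewrite lerD // center_of_close.
Qed.

Lemma covers_greedy_step (F : {set T}) g : (k < #|F|)%N -> covers F -> g \in F ->
  (forall h, h \in F -> cost d (F :\ g) <= cost d (F :\ h)) -> covers (F :\ g).
Proof.
move=> kF covF gF gmin.
have [f fF cost_f] := cost_removal_collision kF covF.
have sub : center_of @: (F :\ g) \subset center_of @: F by rewrite imsetS ?subsetDl.
have := card_imsetD1 center_of F g; have := subset_leq_card sub.
rewrite leq_eqVlt => /orP [/eqP card_eq _ | card_lt card_le].
  have image_eq : center_of @: (F :\ g) = center_of @: F.
    by apply/eqP; rewrite eqEcard sub card_eq leqnn.
  by move: covF; rewrite /covers image_eq.
have Fg0 : F :\ g != set0.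
  by rewrite -card_gt0; move: kF k_gt0; rewrite (cardsD1 g F) gF; lia.
move=> u; have [x xFg e] := dist_to_attained d u Fg0.
exists x; first exact: imset_f.
rewrite -e (le_trans (dist_to_le_cost d u _)) // (le_trans (gmin f fF)) // (le_trans cost_f) //.
rewrite ler_wpM2r ?r_ge0 // ler_nat; have := card_center_image F; lia.
Qed.

Lemma covers_rg_out s (F : {set T}) : rg_exec d F s -> (size s + k <= #|F|)%N ->
  covers F -> covers (rg_out F s).
Proof.
elim: s F => [|g s IH] F //= [gF gmin ex] size_s covF.
have card_Fg : #|F| = #|F :\ g|.+1 by rewrite (cardsD1 g F) gF.
rewrite /rg_out /= -/(rg_out _ _); apply: IH => //; first by move: size_s; rewrite card_Fg; lia.
by apply: covers_greedy_step => //; move: size_s; rewrite card_Fg; lia.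
Qed.

Lemma cost_le_covers (F : {set T}) : covers F -> F != set0 -> cost d F <= (2 * k)%:R * r.
Proof.
move=> covF /set0Pn [y yF]; apply: cost_le => [|u]; first by rewrite mulr_ge0 ?r_ge0.
have [x /imsetP [z zF e] dux] := covF u.
have m_gt0 : (0 < #|center_of @: F|)%N by rewrite card_gt0; apply/set0Pn; exists (center_of y); apply: imset_f.
apply: le_trans (dist_to_le d u zF) _; apply: le_trans (d_triangle u x z) _.
apply: le_trans (lerD dux (center_of_close e)) _; rewrite radius_step.
by rewrite ler_wpM2r ?r_ge0 // ler_nat; have := card_center_image F; lia.
Qed.

Lemma cost_rg_out_le s : rg_exec d [set: T] s -> (size s + k <= #|T|)%N ->
  cost d (rg_out [set: T] s) <= (2 * k)%:R * r.
Proof.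
move=> ex size_s; apply: cost_le_covers.
  by apply: covers_rg_out ex _ covers_setT; rewrite cardsT.
by rewrite -card_gt0 (card_rg_out ex) cardsT; move: size_s k_gt0; lia.
Qed.

End UpperBound.

(* A point is (is_center, j, s): the center c_j (then s = 0) or the client p_(j,s),
   j <= s. *)
Notation raw_point L := (bool * 'I_L.+1 * 'I_(2 * L + 2).+1)%type.

Definition wf_point L (p : raw_point L) : bool :=
  if p.1.1 then nat_of_ord p.2 == 0%N else (nat_of_ord p.1.2 <= p.2)%N.

Definition point (L : nat) : finType := {p : raw_point L | wf_point p}.

Definition nat_dist (a b : nat) : nat := (a - b) + (b - a).

(* [probe t j s] evaluated at the point with coordinates (c, jj, ss) peaks at c_j
   (t = true, value 2j+1) or at p_(j,s) (t = false, value 2j+2) and decays along the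
   edges c_j -- p_(j,s) (length 1), p_(j,s) -- p_(0,s) and c_j -- p_(0,j-1) (length 2j). *)
Definition probe (t : bool) (j s : nat) (c : bool) (jj ss : nat) : nat :=
  if c then (if jj == j then 2 * j + 1 else if jj == 0 then 1 else 0)
  else if t then
    (if jj == j then 2 * j else if (jj == 0) && (ss.+1 == j) then 1 else 0)
  else if jj == j then (if ss == s then 2 * j + 2 else 2 * j)
  else if jj == 0 then (if ss == s then 2 else if ss.+1 == j then 1 else 0)
  else 0.

Ltac probe_lia := rewrite /nat_dist /probe /=; repeat (case: ifP => ?; simpl); lia.

Lemma probe_center_client t j s jj ss :
  (nat_dist (probe t j s true jj 0) (probe t j s false jj ss) <= 1)%N.
Proof. case: t; probe_lia. Qed.

Lemma probe_client_base t j s jj ss :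
  (nat_dist (probe t j s false jj ss) (probe t j s false 0 ss) <= 2 * jj)%N.
Proof. case: t; probe_lia. Qed.

Lemma probe_center_base t j s l : (1 <= l)%N ->
  (nat_dist (probe t j s true l 0) (probe t j s false 0 l.-1) <= 2 * l)%N.
Proof. case: t; probe_lia. Qed.

Section HardInstance.
Variable L : nat.
Local Notation T := (point L).

Definition is_center (x : T) : bool := (val x).1.1.
Definition level (x : T) : nat := (val x).1.2.
Definition column (x : T) : nat := (val x).2.

Lemma level_le (x : T) : (level x <= L)%N.
Proof. by rewrite /level -ltnS ltn_ord. Qed.

Lemma column_le (x : T) : (column x <= 2 * L + 2)%N.
Proof. by rewrite /column -ltnS ltn_ord. Qed.

Lemma center_column (x : T) : is_center x -> column x = 0%N.
Proof. by case: x => [[[[] j] s] h] //= _; apply/eqP. Qed.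

Lemma client_level_le (x : T) : ~~ is_center x -> (level x <= column x)%N.
Proof. by case: x => [[[[] j] s] h]. Qed.

Lemma point_eq (x y : T) :
  is_center x = is_center y -> level x = level y -> column x = column y -> x = y.
Proof.
case: x y => [[[c1 j1] s1] h1] [[[c2 j2] s2] h2].
rewrite /is_center /level /column /= => e1 e2 e3.
by apply: val_inj => /=; rewrite e1; congr (_, _, _); apply: ord_inj.
Qed.

(* Ill-formed coordinates yield c_0. *)
Definition mkpoint (c : bool) (j s : nat) : T :=
  insubd (exist (@wf_point L) (true, ord0, ord0) isT) (c, inord j, inord s).

Definition center j := mkpoint true j 0.
Definition client j s := mkpoint false j s.

Lemma mkpointE c j s : (j <= L)%N -> (s <= 2 * L + 2)%N -> (if c then s == 0%N else (j <= s)%N) ->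
  [/\ is_center (mkpoint c j s) = c, level (mkpoint c j s) = j & column (mkpoint c j s) = s].
Proof.
by move=> hj hs hc; rewrite /is_center /level /column /mkpoint val_insubd /wf_point /= !inordK // hc /= !inordK.
Qed.

Lemma centerE j : (j <= L)%N ->
  [/\ is_center (center j) = true, level (center j) = j & column (center j) = 0%N].
Proof. by move=> hj; have := @mkpointE true j 0 hj (leq0n (2 * L + 2)) (eqxx 0%N). Qed.

Lemma clientE j s : (j <= L)%N -> (s <= 2 * L + 2)%N -> (j <= s)%N ->
  [/\ is_center (client j s) = false, level (client j s) = j & column (client j s) = s].
Proof. exact: (@mkpointE false). Qed.

Definition probe_at (i : raw_point L) (x : T) : nat :=
  probe i.1.1 i.1.2 i.2 (is_center x) (level x) (column x).

(* A sup-distance between probe values, so the triangle inequality comes for free. *)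
Definition hdist (x y : T) : nat :=
  (\max_(i : raw_point L) nat_dist (probe_at i x) (probe_at i y))%N.

Lemma hdist_ge_probe_at i x y : (nat_dist (probe_at i x) (probe_at i y) <= hdist x y)%N.
Proof. exact: (@leq_bigmax _ (fun i => nat_dist (probe_at i x) (probe_at i y))). Qed.

Lemma hdist_ge_probe t j s x y : (j <= L)%N -> (s <= 2 * L + 2)%N ->
  (nat_dist (probe t j s (is_center x) (level x) (column x))
            (probe t j s (is_center y) (level y) (column y)) <= hdist x y)%N.
Proof. by move=> hj hs; have := hdist_ge_probe_at (t, inord j, inord s) x y; rewrite /probe_at /= !inordK. Qed.

Lemma hdist_le x y c :
  (forall i, nat_dist (probe_at i x) (probe_at i y) <= c)%N -> (hdist x y <= c)%N.
Proof. by move=> h; apply/bigmax_leqP => i _; apply: h. Qed.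

Lemma hdist_sym x y : hdist x y = hdist y x.
Proof. by apply: eq_bigr => i _; rewrite /nat_dist addnC. Qed.

Lemma hdist_xx x : hdist x x = 0%N.
Proof. by apply/eqP; rewrite -leqn0; apply: hdist_le => i; rewrite /nat_dist subnn. Qed.

Lemma hdist_triangle x y z : (hdist x z <= hdist x y + hdist y z)%N.
Proof.
apply: hdist_le => i; move: (hdist_ge_probe_at i x y) (hdist_ge_probe_at i y z).
rewrite /nat_dist; lia.
Qed.

Lemma hdist_center_client x y :
  is_center x -> ~~ is_center y -> level x = level y -> (hdist x y <= 1)%N.
Proof.
move=> hx hy e; apply: hdist_le => i.
by rewrite /probe_at hx (negbTE hy) e (center_column hx) probe_center_client.
Qed.

Lemma hdist_client_base x y : ~~ is_center x -> ~~ is_center y -> level y = 0%N ->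
  column x = column y -> (hdist x y <= 2 * level x)%N.
Proof.
move=> hx hy e1 e2; apply: hdist_le => i.
by rewrite /probe_at (negbTE hx) (negbTE hy) e1 e2 probe_client_base.
Qed.

Lemma hdist_center_base x y : is_center x -> (1 <= level x)%N -> ~~ is_center y ->
  level y = 0%N -> (column y).+1 = level x -> (hdist x y <= 2 * level x)%N.
Proof.
move=> hx h1 hy e1 e2; apply: hdist_le => i.
by rewrite /probe_at hx (negbTE hy) e1 (center_column hx) -e2 probe_center_base.
Qed.

Lemma hdist_same_level x y :
  ~~ is_center x -> ~~ is_center y -> level x = level y -> (hdist x y <= 2)%N.
Proof.
move=> hx hy e; have [c1 c2 _] := centerE (level_le x).
apply: leq_trans (hdist_triangle x (center (level x)) y) _.
rewrite hdist_sym -[2%N]/(1 + 1)%N leq_add // hdist_center_client ?c1 ?c2 //.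
Qed.

Lemma hdist_to_far_base x t : (level x <= t)%N -> (t <= 2 * L + 2)%N ->
  (hdist x (client 0 t) <= 2 * level x + 2 - is_center x)%N.
Proof.
move=> h1 h2; have [c1 c2 c3] := clientE (level_le x) h2 h1.
have [d1 d2 d3] := clientE (leq0n L) h2 (leq0n t).
apply: leq_trans (hdist_triangle x (client (level x) t) _) _.
have to_base : (hdist (client (level x) t) (client 0 t) <= 2 * level x)%N.
  by rewrite -{2}c2; apply: hdist_client_base; rewrite ?c1 ?d1 ?d2 ?c3 ?d3.
case hx: (is_center x).
- have := hdist_center_client hx (negbT c1) (esym c2); lia.
- have := hdist_same_level (negbT hx) (negbT c1) (esym c2); lia.
Qed.

Lemma hdist_ge1 x y : x != y -> (1 <= hdist x y)%N.
Proof.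
move=> xy; apply: leq_trans _ (hdist_ge_probe (is_center x) x y (level_le x) (column_le x)).
have : (is_center x != is_center y) || (level x != level y) || (column x != column y).
  by apply: contraNT xy; rewrite !negb_or !negbK => /andP [/andP [/eqP e1 /eqP e2] /eqP e3]; rewrite (point_eq e1 e2 e3).
case hx: (is_center x); case hy: (is_center y) => /=.
- have := center_column hx; have := center_column hy; probe_lia.
- have := center_column hx; probe_lia.
- have := center_column hy; probe_lia.
- have := client_level_le (negbT hx); have := client_level_le (negbT hy); probe_lia.
Qed.

Lemma clients_neq_coords x y : ~~ is_center x -> ~~ is_center y -> x != y ->
  (level x != level y) || (column x != column y).
Proof.
move=> hx hy; apply: contraNT; rewrite !negb_or !negbK => /andP [/eqP e2 /eqP e3].
by rewrite (@point_eq x y) // (negbTE hx) (negbTE hy).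
Qed.

Lemma hdist_clients_ge2 x y : ~~ is_center x -> ~~ is_center y -> x != y -> (2 <= hdist x y)%N.
Proof.
move=> hx hy /(clients_neq_coords hx hy) neq.
apply: leq_trans (hdist_ge_probe false x y (level_le x) (column_le x)).
by move: neq; rewrite (negbTE hx) (negbTE hy); probe_lia.
Qed.

Lemma hdist_center_ge l v : (1 <= l)%N -> (l <= L)%N -> ~~ is_center v -> level v != l ->
  (2 * l + ~~ ((level v == 0%N) && ((column v).+1 == l)) <= hdist (center l) v)%N.
Proof.
move=> h1 h2 hv hl; have [c1 c2 c3] := centerE h2.
apply: leq_trans (hdist_ge_probe true (center l) v h2 (leq0n (2 * L + 2))).
rewrite c1 c2 c3 (negbTE hv); move: hl; probe_lia.
Qed.

Lemma hdist_client_ge j s v : (j <= L)%N -> (j <= s)%N -> (s <= 2 * L + 2)%N ->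
  ~~ is_center v -> (level v != j) || (j == 0%N) -> ~~ ((level v == 0%N) && (column v == s)) ->
  (2 * j + 1 + ~~ ((level v == 0%N) && ((column v).+1 == j)) <= hdist (client j s) v)%N.
Proof.
move=> h1 h2 h3 hv hl hs; have [c1 c2 c3] := clientE h1 h3 h2.
apply: leq_trans (hdist_ge_probe false (client j s) v h1 h3).
rewrite c1 c2 c3 (negbTE hv); move: hl hs; probe_lia.
Qed.

Lemma L_le_max_column : (L <= 2 * L + 2)%N.
Proof. lia. Qed.

Definition clients : {set T} := [set x | ~~ is_center x].

Definition stage (a b : nat) : {set T} :=
  [set x | ~~ is_center x && (((level x == 0%N) && (a <= column x)%N)
                              || [&& b <= level x, 1 <= level x & column x == L]%N)].

(* Removing the base client p_(0,a) strands c_(a+1) (or p_(L,L) when a = L). *)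
Definition base_cost a := if (a < L)%N then (2 * a + 3)%N else (2 * a + 2)%N.

Lemma base_removal_witness a g : (a <= L)%N -> g \in stage a (a + 2) ->
  exists u, forall v, v \in stage a (a + 2) -> v != g -> (base_cost a <= hdist u v)%N.
Proof.
move=> ha; rewrite inE => /andP [hg /orP [/andP [/eqP g0 ga] | /and3P [g1 g2 /eqP gL]]].
- case: (eqVneq (column g) a) => [gch|gne].
  + case: (ltnP a L) => aL.
    * exists (center a.+1) => v; rewrite inE => /andP [hv hv2] ne.
      have := clients_neq_coords hv hg ne; have := level_le v.
      have := hdist_center_ge (ltn0Sn a) aL hv; rewrite /base_cost aL.
      move: hv2; rewrite g0 gch; lia.
    * exists (client L L) => v; rewrite inE => /andP [hv hv2] ne.
      have := clients_neq_coords hv hg ne; have := level_le v.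
      have := hdist_client_ge (leqnn L) (leqnn L) L_le_max_column hv.
      rewrite /base_cost; case: ifP => hif; move: hv2; rewrite g0 gch; lia.
  + pose j := if (a < L)%N then a.+1 else L.
    have hj : (j <= L)%N by rewrite /j; case: ifP.
    have hjc : (j <= column g)%N by rewrite /j; case: ifP => hif2; lia.
    exists (client j (column g)) => v; rewrite inE => /andP [hv hv2] ne.
    have := clients_neq_coords hv hg ne; have := level_le v.
    have := hdist_client_ge hj hjc (column_le g) hv.
    rewrite /base_cost /j; move: hv2 gne; rewrite g0; case: ifP => aL; lia.
- exists (center (level g)) => v; rewrite inE => /andP [hv hv2] ne.
  have := clients_neq_coords hv hg ne; have := level_le v.
  have := hdist_center_ge g2 (level_le g) hv.
  rewrite /base_cost; move: hv2; rewrite gL; case: ifP => hif; lia.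
Qed.

Lemma top_removal_witness a g : (a + 2 <= L)%N -> g \in stage a.+1 (a + 2) ->
  exists u, forall v, v \in stage a.+1 (a + 2) -> v != g -> (2 * a + 4 <= hdist u v)%N.
Proof.
move=> ha; rewrite inE => /andP [hg /orP [/andP [/eqP g0 ga] | /and3P [g1 g2 /eqP gL]]].
- have hj : (a.+1 <= L)%N by lia.
  exists (client a.+1 (column g)) => v; rewrite inE => /andP [hv hv2] ne.
  have := clients_neq_coords hv hg ne; have := level_le v.
  have := hdist_client_ge hj ga (column_le g) hv.
  move: hv2; rewrite g0; lia.
- exists (center (level g)) => v; rewrite inE => /andP [hv hv2] ne.
  have := clients_neq_coords hv hg ne; have := level_le v.
  have := hdist_center_ge g2 (level_le g) hv.
  move: hv2; rewrite gL; lia.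
Qed.

Lemma far_base_in_stage p q : (p <= 2 * L + 2)%N -> client 0 (2 * L + 2) \in stage p q.
Proof. by move=> hp; have [b1 b2 b3] := clientE (leq0n L) (leqnn _) (leq0n _); rewrite inE b1 b2 b3 /= hp. Qed.

Lemma stage_client p q x : x \in stage p q -> ~~ is_center x.
Proof. by rewrite inE => /andP []. Qed.

Lemma top_client_in_stage p q j : (1 <= j)%N -> (q <= j)%N -> (j <= L)%N ->
  client j L \in stage p q /\ level (client j L) = j.
Proof.
by move=> h1 hq hj; have [e1 e2 e3] := clientE hj L_le_max_column hj; rewrite inE e1 e2 e3 /= hq h1 eqxx orbT.
Qed.

Lemma stage_covers_center p q c u : is_center u -> (p <= 2 * L + 2)%N -> (1 <= q)%N ->
  (1 <= c)%N ->
  (forall j, (1 <= j)%N -> (j <= L)%N -> (j < q)%N ->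
     ((j == p.+1) && (2 * j <= c)%N) || (2 * j + 1 <= c)%N) ->
  exists2 v, v \in stage p q & (hdist u v <= c)%N.
Proof.
move=> hu hp hq hc Hcenter.
have hl : (level u <= 2 * L + 2)%N by have := level_le u; lia.
have far : (hdist u (client 0 (2 * L + 2)) <= 2 * level u + 1)%N.
  by move: (hdist_to_far_base hl (leqnn _)); rewrite hu; lia.
case: (ltnP (level u) q) => [lt_q|ge_q]; last first.
  have [in_stage e] := top_client_in_stage p (leq_trans hq ge_q) ge_q (level_le u).
  exists (client (level u) L) => //.
  by apply: leq_trans (hdist_center_client hu (stage_client in_stage) (esym e)) hc.
case: (posnP (level u)) => [l0|l_gt0].
  by exists (client 0 (2 * L + 2)); [exact: far_base_in_stage | move: far; rewrite l0; lia].
case/orP: (Hcenter _ l_gt0 (level_le u) lt_q) => [/andP [/eqP e le_c] | le_c].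
  have [e1 e2 e3] := clientE (leq0n L) hp (leq0n p).
  exists (client 0 p); first by rewrite inE e1 e2 e3 /= leqnn.
  by apply: leq_trans (hdist_center_base hu l_gt0 _ e2 _) le_c; rewrite ?e1 ?e3.
- by exists (client 0 (2 * L + 2)); [exact: far_base_in_stage | apply: leq_trans far le_c].
Qed.

Lemma stage_covers_client p q c u : ~~ is_center u -> (p <= 2 * L + 2)%N -> (1 <= q)%N ->
  (2 <= c)%N ->
  (forall j, (1 <= j)%N -> (j <= L)%N -> (j < q)%N -> (2 * j <= c)%N) ->
  (forall j, (1 <= j)%N -> (j < q)%N -> (j < p)%N -> (2 * j + 2 <= c)%N) ->
  exists2 v, v \in stage p q & (hdist u v <= c)%N.
Proof.
move=> hu hp hq hc Hbase Hfar.
case: (ltnP (level u) q) => [lt_q|ge_q]; last first.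
  have [in_stage e] := top_client_in_stage p (leq_trans hq ge_q) ge_q (level_le u).
  exists (client (level u) L) => //.
  by apply: leq_trans (hdist_same_level hu (stage_client in_stage) (esym e)) hc.
case: (leqP p (column u)) => [p_le|p_gt].
  case: (posnP (level u)) => [l0|l_gt0].
    by exists u; rewrite ?hdist_xx // inE hu l0 p_le.
  have [e1 e2 e3] := clientE (leq0n L) (column_le u) (leq0n (column u)).
  exists (client 0 (column u)); first by rewrite inE e1 e2 e3 /= p_le.
  apply: leq_trans (hdist_client_base hu _ e2 _) (Hbase _ l_gt0 (level_le u) lt_q); by rewrite ?e1 ?e3.
exists (client 0 (2 * L + 2)); first exact: far_base_in_stage.
have hl : (level u <= 2 * L + 2)%N by have := level_le u; lia.
apply: leq_trans (hdist_to_far_base hl (leqnn _)) _; rewrite (negbTE hu) subn0.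
case: (posnP (level u)) => [-> //|l_gt0].
by apply: Hfar => //; apply: leq_ltn_trans (client_level_le hu) p_gt.
Qed.

Lemma clients_cover u : exists2 v, v \in clients & (hdist u v <= 1)%N.
Proof.
case hu: (is_center u); last by exists u; rewrite ?inE ?hu ?hdist_xx.
have hl : (level u <= 2 * L + 2)%N by have := level_le u; lia.
have [e1 e2 _] := clientE (level_le u) (leqnn _) hl.
exists (client (level u) (2 * L + 2)); first by rewrite inE e1.
by apply: hdist_center_client; rewrite ?e1 ?e2.
Qed.

Lemma stage_sub p p' q q' : (p <= p')%N -> (q <= q')%N -> stage p' q' \subset stage p q.
Proof.
move=> hp hq; apply/subsetP => x; rewrite !inE => /andP [-> /orP [/andP [-> h] | /and3P [h1 h2 h3]]].
  by rewrite (leq_trans hp h).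
by rewrite (leq_trans hq h1) h2 h3 orbT.
Qed.

Lemma stage_sub_clients p q : stage p q \subset clients.
Proof. by apply/subsetP => x /stage_client; rewrite inE. Qed.

Lemma stage_top_empty p b b' : (L < b)%N -> (L < b')%N -> stage p b = stage p b'.
Proof.
move=> hb hb'; apply/setP => x; rewrite !inE; have := level_le x.
case: (is_center x) => //=; case: (level x == 0%N); case: (p <= column x)%N => //=; lia.
Qed.

Lemma far_base_pair p q : (p <= 2 * L + 1)%N ->
  [/\ client 0 (2 * L + 2) \in stage p q, client 0 (2 * L + 1) \in stage p q
    & client 0 (2 * L + 2) != client 0 (2 * L + 1)].
Proof.
move=> hp; have hp' : (p <= 2 * L + 2)%N by lia.
have [c1 c2 c3] := clientE (leq0n L) (leqnn _) (leq0n (2 * L + 2)).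
have hcol : (2 * L + 1 <= 2 * L + 2)%N by lia.
have [d1 d2 d3] := clientE (leq0n L) hcol (leq0n (2 * L + 1)).
split; first exact: far_base_in_stage.
  by rewrite inE d1 d2 d3 /= hp.
by apply/eqP => /(f_equal column); rewrite c3 d3; lia.
Qed.

Lemma stage_setD1_neq0 p q g : (p <= 2 * L + 1)%N -> stage p q :\ g != set0.
Proof. by move=> /(far_base_pair q) [x_in y_in xy]; apply: setD1_neq0 x_in y_in xy. Qed.

Lemma stage_covers p q c : (p <= 2 * L + 2)%N -> (1 <= q)%N -> (2 <= c)%N ->
  (forall j, (1 <= j)%N -> (j <= L)%N -> (j < q)%N -> (2 * j <= c)%N) ->
  (forall j, (1 <= j)%N -> (j < q)%N -> (j < p)%N -> (2 * j + 2 <= c)%N) ->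
  (forall j, (1 <= j)%N -> (j <= L)%N -> (j < q)%N ->
     ((j == p.+1) && (2 * j <= c)%N) || (2 * j + 1 <= c)%N) ->
  forall u, exists2 v, v \in stage p q & (hdist u v <= c)%N.
Proof.
move=> hp hq hc Hbase Hfar Hcenter u; case hu: (is_center u).
  by apply: stage_covers_center => //; apply: ltnW.
by apply: stage_covers_client; rewrite ?hu.
Qed.

Fixpoint schedule (n a : nat) : seq T :=
  if n is n'.+1 then
    enum (stage a (a + 2) :\: stage a.+1 (a + 2)) ++
    enum (stage a.+1 (a + 2) :\: stage a.+1 (a + 3)) ++ schedule n' a.+1
  else [::].

Definition bad_out : {set T} := stage (L + 1) (L + 3).

Definition bad_run : seq T :=
  enum ([set: T] :\: clients) ++ enum (clients :\: stage 0 2) ++ schedule (L + 1) 0.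

Lemma card_bad_out : #|bad_out| = (L + 2)%N.
Proof.
pose f (i : 'I_(L + 2)) : T := client 0 (L + 1 + i).
have fE i : [/\ is_center (f i) = false, level (f i) = 0%N & column (f i) = (L + 1 + i)%N].
  by apply: clientE => //; have := ltn_ord i; lia.
have f_inj : injective f.
  move=> i j /(f_equal column); have [_ _ ->] := fE i; have [_ _ ->] := fE j.
  by move=> e; apply: ord_inj; lia.
suff -> : bad_out = f @: [set: 'I_(L + 2)] by rewrite card_imset // cardsT card_ord.
apply/setP => x; apply/idP/imsetP => [|[i _ ->]]; last first.
  by have [e1 e2 e3] := fE i; rewrite inE e1 e2 e3 /=; lia.
rewrite inE => /andP [hx h]; have := level_le x; have := column_le x => hc hl.
have hi : (column x - (L + 1) < L + 2)%N by lia.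
exists (Ordinal hi) => //; have [e1 e2 e3] := fE (Ordinal hi).
by apply: point_eq; rewrite ?e1 ?e2 ?e3 /= ?(negbTE hx) //; lia.
Qed.

Definition centers : {set T} := [set x | is_center x].

Lemma card_centers : (#|centers| <= L + 1)%N.
Proof.
have level_inj : {in centers &, injective (fun x : T => (val x).1.2)}.
  move=> x y; rewrite !inE => hx hy e; apply: point_eq; rewrite ?hx ?hy //.
    by rewrite /level e.
  by rewrite !center_column.
by rewrite -(card_in_imset level_inj) addn1 -[X in (_ <= X)%N]card_ord max_card.
Qed.

Lemma card_point : (L + 2 < #|T|)%N.
Proof.
have [c1 _ _] := centerE (leq0n L).
have c_out : center 0 \notin bad_out by rewrite inE c1.
by rewrite -card_bad_out; apply: (leq_trans _ (max_card (center 0 |: bad_out))); rewrite cardsU1 c_out.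
Qed.

End HardInstance.

Section HardInstanceReal.
Variables (R : realFieldType) (L : nat).
Local Notation T := (point L).

Definition hdistR (x y : T) : R := (hdist x y)%:R.

Lemma hdistR_metric : is_metric hdistR.
Proof.
split => [x y | x y | x y | x y z]; rewrite /hdistR.
- exact: ler0n.
- rewrite pnatr_eq0; case: (eqVneq x y) => [->|xy]; first by rewrite hdist_xx eqxx.
  by move: (hdist_ge1 xy); case: (hdist x y).
- by rewrite hdist_sym.
- by rewrite -natrD ler_nat hdist_triangle.
Qed.

Lemma cost_hdist_le (F : {set T}) (c : nat) :
  (forall u, exists2 v, v \in F & (hdist u v <= c)%N) -> cost hdistR F <= c%:R.
Proof.
move=> h; apply: cost_le => [|u]; first exact: ler0n.
by have [v vF hv] := h u; apply: le_trans (dist_to_le hdistR u vF) _; rewrite ler_nat.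
Qed.

Lemma cost_hdist_ge (F : {set T}) u (c : nat) :
  F != set0 -> (forall v, v \in F -> (c <= hdist u v)%N) -> c%:R <= cost hdistR F.
Proof.
move=> F0 h; apply: le_trans (dist_to_le_cost hdistR u F).
by apply: dist_to_ge => // v vF; rewrite ler_nat h.
Qed.

Lemma hard_phase (F0 Fend : {set T}) (c : nat) : Fend \subset F0 -> Fend != set0 ->
  (forall g, g \in F0 -> F0 :\ g != set0) ->
  (forall g, g \in F0 -> exists u, forall v, v \in F0 -> v != g -> (c <= hdist u v)%N) ->
  (forall u, exists2 v, v \in Fend & (hdist u v <= c)%N) ->
  rg_run hdistR F0 (enum (F0 :\: Fend)) Fend.
Proof.
move=> sub Fend0 F0g0 witness covers; apply: (rg_phase (c := c%:R)) => //; last exact: cost_hdist_le.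
move=> g gF; have [u hu] := witness g gF; apply: (cost_hdist_ge (u := u) (F0g0 g gF)) => v.
by rewrite !inE => /andP [vg vF]; apply: hu.
Qed.

Lemma base_phase a : (a <= L)%N ->
  rg_run hdistR (stage L a (a + 2)) (enum (stage L a (a + 2) :\: stage L a.+1 (a + 2)))
         (stage L a.+1 (a + 2)).
Proof.
move=> aL; apply: (hard_phase (c := base_cost L a)).
- by apply: stage_sub; lia.
- by apply/set0Pn; exists (client L 0 (2 * L + 2)); apply: far_base_in_stage; lia.
- by move=> g _; apply: stage_setD1_neq0; lia.
- by move=> g; apply: base_removal_witness.
- by apply: stage_covers; intros; rewrite /base_cost; case: (ltnP a L) => ?; lia.
Qed.

Lemma top_phase a : (a <= L)%N ->
  rg_run hdistR (stage L a.+1 (a + 2)) (enum (stage L a.+1 (a + 2) :\: stage L a.+1 (a + 3)))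
         (stage L a.+1 (a + 3)).
Proof.
move=> aL; case: (leqP (a + 2) L) => a2L; last first.
  by rewrite -(@stage_top_empty L a.+1 (a + 2)) ?setDv ?enum_set0 //; lia.
apply: (hard_phase (c := (2 * a + 4)%N)).
- by apply: stage_sub; lia.
- by apply/set0Pn; exists (client L 0 (2 * L + 2)); apply: far_base_in_stage; lia.
- by move=> g _; apply: stage_setD1_neq0; lia.
- by move=> g; apply: top_removal_witness.
- by apply: stage_covers; intros; lia.
Qed.

Lemma schedule_run n a : (a + n = L + 1)%N ->
  rg_run hdistR (stage L a (a + 2)) (schedule L n a) (stage L (L + 1) (L + 3)).
Proof.
elim: n a => [|n IH] a ha /=.
  by rewrite addn0 in ha; rewrite ha -addnA.
have aL : (a <= L)%N by lia.
apply: rg_run_cat (base_phase aL) _; apply: rg_run_cat (top_phase aL) _.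
have -> : (a + 3 = a.+1 + 2)%N by lia.
by apply: IH; lia.
Qed.

Lemma clients_phase : rg_run hdistR [set: T] (enum ([set: T] :\: clients L)) (clients L).
Proof.
have [x_in _ xy] := far_base_pair 0 (leq0n (2 * L + 1)).
apply: (hard_phase (c := 1%N)).
- exact: subsetT.
- by apply/set0Pn; exists (client L 0 (2 * L + 2)); apply: (subsetP (stage_sub_clients L 0 0)).
- by move=> g _; apply: setD1_neq0 xy; rewrite inE.
- by move=> g _; exists g => v _ vg; rewrite hdist_ge1 // eq_sym.
- exact: clients_cover.
Qed.

Lemma first_stage_phase :
  rg_run hdistR (clients L) (enum (clients L :\: stage L 0 2)) (stage L 0 2).
Proof.
have [x_in y_in xy] := far_base_pair 0 (leq0n (2 * L + 1)).
have [x_cl y_cl] := (subsetP (stage_sub_clients L 0 0) _ x_in, subsetP (stage_sub_clients L 0 0) _ y_in).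
apply: (hard_phase (c := 2%N)).
- exact: stage_sub_clients.
- by apply/set0Pn; exists (client L 0 (2 * L + 2)); apply: far_base_in_stage.
- by move=> g _; apply: setD1_neq0 xy.
- move=> g; rewrite inE => hg; exists g => v; rewrite inE => hv vg.
  by rewrite hdist_clients_ge2 // eq_sym.
- by apply: stage_covers; intros; lia.
Qed.

Lemma rg_run_bad_run : rg_run hdistR [set: T] (bad_run L) (bad_out L).
Proof.
apply: rg_run_cat clients_phase _; apply: rg_run_cat first_stage_phase _.
exact: schedule_run.
Qed.

Lemma cost_bad_out : cost hdistR (bad_out L) = (2 * L + 2)%:R.
Proof.
apply/eqP; rewrite eq_le; apply/andP; split.
  by apply: cost_hdist_le; apply: stage_covers; intros; lia.
apply: (cost_hdist_ge (u := client L L L)).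
  by apply/set0Pn; exists (client L 0 (2 * L + 2)); apply: far_base_in_stage; lia.
move=> v; rewrite inE => /andP [hv h].
have := hdist_client_ge (leqnn L) (leqnn L) (L_le_max_column L) hv.
by have := level_le v; move: h; lia.
Qed.

Lemma cost_centers : cost hdistR (centers L) = 1.
Proof.
apply/eqP; rewrite eq_le; apply/andP; split.
  apply: (cost_hdist_le (c := 1%N)) => u; case hu: (is_center u).
    by exists u; rewrite ?inE ?hdist_xx.
  have [c1 c2 _] := centerE (level_le u); exists (center L (level u)); first by rewrite inE c1.
  by rewrite hdist_sym; apply: hdist_center_client; rewrite ?c1 ?c2 ?hu.
have [b1 _ _] := clientE (leq0n L) (leqnn (2 * L + 2)) (leq0n _).
apply: (cost_hdist_ge (c := 1%N) (u := client L 0 (2 * L + 2))).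
  by apply/set0Pn; exists (center L 0); rewrite inE; case: (centerE (leq0n L)).
by move=> v; rewrite inE => hv; apply: hdist_ge1; apply: contraTneq hv => <-; rewrite b1.
Qed.

Lemma cost_small_ge1 (F : {set T}) : (#|F| <= L + 2)%N -> F != set0 -> 1 <= cost hdistR F.
Proof.
move=> card_F F0; have /subsetPn [u _ uF] : ~~ ([set: T] \subset F).
  by apply: contraTN card_F => /subset_leq_card; rewrite cardsT -ltnNge; apply: leq_trans (card_point L).
apply: (cost_hdist_ge (c := 1%N) (u := u) F0) => v vF; apply: hdist_ge1.
by apply: contraNneq uF => ->.
Qed.

End HardInstanceReal.

Theorem theorem1 (R : realType) :
  (* upper bound: every execution is a 2k-approximation *)
  (forall (T : finType) (d : T -> T -> R) (k : nat),
      is_metric d -> (1 <= k)%N -> (k <= #|T|)%N ->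
      forall s : seq T,
        rg_exec d [set: T] s -> size s = (#|T| - k)%N ->
        forall opt : R, is_OPT d k opt ->
          cost d (rg_out [set: T] s) <= (2 * k)%:R * opt) /\
  (* lower bound: some instance and execution achieve (2k-2) * OPT, OPT > 0 *)
  (forall k : nat, (2 <= k)%N ->
      exists (T : finType) (d : T -> T -> R),
        [/\ is_metric d, (k <= #|T|)%N &
          exists s : seq T,
            [/\ rg_exec d [set: T] s, size s = (#|T| - k)%N &
              exists opt : R,
                [/\ is_OPT d k opt, 0 < opt &
                    cost d (rg_out [set: T] s) = (2 * k - 2)%:R * opt]]]).
Proof.
split.
  move=> T d k d_metric _ k_le s ex size_s opt [[O /andP [O0 card_O] cost_O] _].
  apply: (cost_rg_out_le d_metric O0 card_O _ ex); first by rewrite cost_O.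
  by rewrite size_s subnK.
move=> k k_ge2; have [L ->] : exists L, k = (L + 2)%N by exists (k - 2)%N; lia.
exists (point L), (@hdistR R L); split; [exact: hdistR_metric | exact: ltnW (@card_point L) |].
have [ex out] := rg_run_bad_run R L.
exists (bad_run L); split => //.
  by have := card_rg_out ex; rewrite out card_bad_out cardsT; have := @card_point L; lia.
exists 1; split => //; last by rewrite out cost_bad_out mulr1; congr _%:R; lia.
split; last by move=> F /andP [F0 card_F]; apply: cost_small_ge1.
exists (centers L); last exact: cost_centers.
have [c1 _ _] := centerE (leq0n L).
rewrite (leq_trans (card_centers L)) ?leq_add2l // andbT.
by apply/set0Pn; exists (center L 0); rewrite inE c1.
Qed.
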